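(* Let $n\ge q\ge 1$ and let $\mathcal{G}$ be a requirements graph on the $n$ factors $F_1,\dots,F_n$. There exists a blocked $2^n$ factorial in blocks of size $2^q$ from which all $n$ main effects and all two-factor interactions corresponding to edges of $\mathcal{G}$ are estimable if and only if the chromatic number of $\mathcal{G}$ is at most $2^q-1$.
   Context: A blocked $2^n$ factorial in blocks of size $2^q$ is specified by a $q\times n$ generator matrix $X$ over $\mathrm{GF}(2)$ of rank $q$: the principal block is the row space of $X$ and the other blocks are its cosets in $\mathrm{GF}(2)^n$. An effect of a set $S$ of factors, with contrast $(-1)^{\sum_{j\in S}x_j}$, is estimable iff its contrast sums to zero over every block. A requirements graph is a simple graph with vertex set $\{F_1,\dots,F_n\}$ and an edge $F_iF_j$ whenever the interaction $F_iF_j$ is required to be estimable. *)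

From HB Require Import structures.
From mathcomp Require Import all_boot all_order all_algebra.
Set Implicit Arguments. Unset Strict Implicit. Unset Printing Implicit Defensive.
Import GRing.Theory.
Local Open Scope ring_scope.

(* Treatment combinations: row vectors x in GF(2)^n.  A blocked design is given by
   a q x n generator matrix X over GF(2); the blocks are the cosets c + rowspace(X). *)

Definition in_block (n q : nat) (X : 'M['F_2]_(q, n)) (c x : 'rV['F_2]_n) : bool :=
  ((x - c)%R <= X)%MS.

Definition contrast (n : nat) (S : {set 'I_n}) (x : 'rV['F_2]_n) : int :=
  if (\sum_(j in S) x ord0 j == 0 :> 'F_2) then 1%R else (-1)%R.

Definition estimable (n q : nat) (X : 'M['F_2]_(q, n)) (S : {set 'I_n}) : Prop :=
  forall c : 'rV['F_2]_n, (\sum_(x | in_block X c x) contrast S x)%R = 0%R.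

Definition simple_graph (n : nat) (e : rel 'I_n) : Prop :=
  symmetric e /\ irreflexive e.

Definition colorable (n : nat) (e : rel 'I_n) (k : nat) : bool :=
  [exists f : {ffun 'I_n -> 'I_k}, [forall i, forall j, e i j ==> (f i != f j)]].

Definition chromatic_number (n : nat) (e : rel 'I_n) : nat :=
  find (colorable e) (iota 0 n.+1)%N.

From mathcomp Require Import all_boot all_order all_algebra zify.
Set Implicit Arguments. Unset Strict Implicit. Unset Printing Implicit Defensive.
Import GRing.Theory Num.Theory.
Local Open Scope ring_scope.

(* For a set S of factors let ell_S(x) = sum_(j in S) x_j, a linear form on
   GF(2)^n; the contrast of S is (-1)^(ell_S x).
   1. Estimability criterion: the effect of S is estimable iff ell_S does not
      vanish on the principal block rowspace(X), i.e. iff some row r of X has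
      ell_S(r) = 1.  If ell_S vanishes there, the contrast sums to the (nonzero)
      block size over the principal block; otherwise translation by r permutes
      every block and flips every contrast, so each block sum is its opposite.
   2. Hence F_i is estimable iff column i of X is nonzero, and F_i F_j (i != j)
      iff columns i and j differ: the columns of an admissible X form a proper
      colouring of the graph by the 2^q - 1 nonzero vectors of GF(2)^q.
   3. Conversely, from such a colouring we build X column by column; since
      q <= n, recolouring vertices one at a time makes every unit vector e_k a
      column, which forces rank X = q. *)

Lemma F2_cases (x : 'F_2) : x = 0 \/ x = 1.
Proof.
case: x => [[|[|m]] lt_m2]; [left | right | by []]; exact: val_inj.
Qed.

Lemma F2_neq0 (x : 'F_2) : x != 0 -> x = 1.
Proof. by case: (F2_cases x) => ->; rewrite ?eqxx. Qed.

Lemma F2_1add1 : 1 + 1 = 0 :> 'F_2.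
Proof. exact: val_inj. Qed.

Lemma F2_add_neq0 (a b : 'F_2) : (a + b != 0) = (a != b).
Proof.
by case: (F2_cases a) => ->; case: (F2_cases b) => ->; rewrite ?F2_1add1 ?addr0 ?add0r.
Qed.

Definition ell n (S : {set 'I_n}) (x : 'rV['F_2]_n) : 'F_2 := \sum_(j in S) x ord0 j.

Lemma ellD n (S : {set 'I_n}) (x y : 'rV['F_2]_n) : ell S (x + y) = ell S x + ell S y.
Proof. by rewrite /ell -big_split; apply: eq_bigr => j _; rewrite mxE. Qed.

Lemma ell_mul n q (X : 'M['F_2]_(q, n)) (S : {set 'I_n}) (u : 'rV['F_2]_q) :
  ell S (u *m X) = \sum_r u ord0 r * \sum_(j in S) X r j.
Proof.
rewrite /ell; under eq_bigr => j _ do rewrite mxE.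
by rewrite exchange_big; apply: eq_bigr => r _; rewrite mulr_sumr.
Qed.

Lemma contrastE n (S : {set 'I_n}) (x : 'rV['F_2]_n) :
  contrast S x = if ell S x == 0 then 1 else -1.
Proof. by []. Qed.

Lemma in_block_translate n q (X : 'M['F_2]_(q, n)) (c x r : 'rV['F_2]_n) :
  (r <= X)%MS -> in_block X c (x + r) = in_block X c x.
Proof.
move=> rX; rewrite /in_block addrAC; apply/idP/idP => xX; last exact: addmx_sub.
by rewrite -(addrK r (x - c)); apply: addmx_sub => //; rewrite -scaleN1r scalemx_sub.
Qed.

(* If ell_S vanishes on the rows of X, the principal block has contrast sum
   equal to its (positive) size. *)
Lemma not_estimable n q (X : 'M['F_2]_(q, n)) (S : {set 'I_n}) :
  (forall r, \sum_(j in S) X r j = 0) -> ~ estimable X S.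
Proof.
move=> ell0 /(_ 0).
have contrast1 x : in_block X 0 x -> contrast S x = 1.
  rewrite /in_block subr0 => /submxP [u ->].
  by rewrite contrastE ell_mul big1 ?eqxx // => r _; rewrite ell0 mulr0.
rewrite (eq_bigr _ contrast1) sumr_const -mulr_natl mulr1 => /eqP.
rewrite pnatr_eq0 => /eqP /card0_eq /(_ 0).
by rewrite unfold_in /= /in_block subr0 sub0mx.
Qed.

(* If some row r of X has ell_S r = 1, translation by r is a bijection of each
   block reversing every contrast, so each block sum is zero. *)
Lemma estimable_of_row n q (X : 'M['F_2]_(q, n)) (S : {set 'I_n}) (r : 'I_q) :
  \sum_(j in S) X r j != 0 -> estimable X S.
Proof.
move=> ell_r c; set r0 := row r X.
have ell_r0 : ell S r0 = 1.
  by apply: F2_neq0; rewrite /ell; under eq_bigr => j _ do rewrite mxE.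
set s := \sum_(x | in_block X c x) contrast S x.
suff : s = - s by lia.
rewrite {1}/s (reindex_inj (addIr r0)) /= -sumrN.
apply: eq_big => [x | x _]; first exact/in_block_translate/row_sub.
rewrite !contrastE ellD ell_r0.
by case: (F2_cases (ell S x)) => ->; rewrite ?F2_1add1 ?add0r ?eqxx ?opprK.
Qed.

Lemma estimableP n q (X : 'M['F_2]_(q, n)) (S : {set 'I_n}) :
  estimable X S <-> exists r, \sum_(j in S) X r j != 0.
Proof.
split=> [est | [r /estimable_of_row] //].
apply/existsP; apply: contraT; rewrite negb_exists => /forallP ell0.
by case: (not_estimable (fun r => eqP (negbNE (ell0 r)))).
Qed.

Lemma col_neq q n (X : 'M['F_2]_(q, n)) i j :
  (col i X != col j X) = [exists r, X r i != X r j].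
Proof.
apply/idP/existsP => [neq | [r]]; last first.
  by apply: contra => /eqP /matrixP /(_ r ord0); rewrite !mxE => ->.
apply/existsP; apply: contraNT neq => /existsPn eq_ij; apply/eqP/matrixP => r k.
by rewrite !mxE; apply/eqP; rewrite -[_ == _]negbK eq_ij.
Qed.

Lemma estimable_main n q (X : 'M['F_2]_(q, n)) i :
  estimable X [set i] <-> col i X != 0.
Proof.
rewrite estimableP; split=> [[r] | nz].
  rewrite big_set1; apply: contra => /eqP /matrixP /(_ r ord0).
  by rewrite !mxE => ->.
have [r Xri] : exists r, X r i != 0.
  apply/existsP; apply: contraNT nz => /existsPn Xi0.
  by apply/eqP/matrixP => r k; rewrite !mxE; apply/eqP/negbNE.
by exists r; rewrite big_set1.
Qed.

Lemma estimable_interaction n q (X : 'M['F_2]_(q, n)) i j : i != j ->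
  estimable X [set i; j] <-> col i X != col j X.
Proof.
move=> neq_ij; rewrite estimableP col_neq.
have sum2 r : \sum_(k in [set i; j]) X r k = X r i + X r j.
  by rewrite big_setU1 ?big_set1 // inE.
by split=> [[r] | /existsP [r]]; rewrite ?sum2 ?F2_add_neq0 => nz;
  [apply/existsP|]; exists r; rewrite ?sum2 ?F2_add_neq0.
Qed.

Lemma colorable_widen n (e : rel 'I_n) k k' : (k <= k')%N -> colorable e k -> colorable e k'.
Proof.
move=> le_kk' /existsP [f /forallP f_proper]; apply/existsP.
exists [ffun i => widen_ord le_kk' (f i)]; apply/forallP => i; apply/forallP => j.
apply/implyP => eij; rewrite !ffunE.
by apply: contra (implyP (forallP (f_proper i) j) eij) => /eqP [] /val_inj ->.
Qed.

Lemma colorable_id n (e : rel 'I_n) : irreflexive e -> colorable e n.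
Proof.
move=> e_irr; apply/existsP; exists [ffun i => i].
apply/forallP => i; apply/forallP => j; apply/implyP => eij; rewrite !ffunE.
by apply: contraL eij => /eqP ->; rewrite e_irr.
Qed.

Lemma chromatic_number_le n (e : rel 'I_n) k :
  irreflexive e -> (chromatic_number e <= k)%N = colorable e k.
Proof.
move=> e_irr.
have has_col : has (colorable e) (iota 0 n.+1).
  by apply/hasP; exists n; [rewrite mem_iota; lia | exact: colorable_id].
have chi_lt : (chromatic_number e < n.+1)%N.
  by rewrite -[X in (_ < X)%N](size_iota 0 n.+1) -has_find.
have chi_col : colorable e (chromatic_number e).
  by have := nth_find 0 has_col; rewrite nth_iota ?add0n.
apply/idP/idP => [le_chi_k | k_col]; first exact: colorable_widen chi_col.
case: (leqP k n) => [le_kn | lt_nk]; last lia.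
rewrite leqNgt; apply/negP => /(before_find 0).
by rewrite nth_iota ?add0n ?k_col // ltnS.
Qed.

Definition proper_coloring n (T : finType) (e : rel 'I_n) (A : {set T}) (c : 'I_n -> T) :=
  (forall i, c i \in A) /\ (forall i j, e i j -> c i != c j).

Lemma colorable_setP n (T : finType) (e : rel 'I_n) (A : {set T}) :
  colorable e #|A| <-> exists c : 'I_n -> T, proper_coloring e A c.
Proof.
split=> [/existsP [f /forallP f_proper] | [c [cA c_proper]]].
  exists (fun i => enum_val (f i)); split=> [i | i j eij]; first exact: enum_valP.
  by apply: contra (implyP (forallP (f_proper i) j) eij) => /eqP /enum_val_inj ->.
apply/existsP; exists [ffun i => enum_rank_in (cA i) (c i)].
apply/forallP => i; apply/forallP => j; apply/implyP => eij; rewrite !ffunE.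
apply: contra (c_proper i j eij) => /eqP eq_rank.
by rewrite -(enum_rankK_in (cA i) (cA i)) -(enum_rankK_in (cA j) (cA j)) eq_rank.
Qed.

Lemma card_nonzero_vectors q : #|[set v : 'cV['F_2]_q | v != 0]| = (2 ^ q - 1)%N.
Proof.
have -> : [set v : 'cV['F_2]_q | v != 0] = [set~ 0] by apply/setP => v; rewrite !inE.
by rewrite cardsC1 card_mx card_Fp // muln1 subn1.
Qed.

Lemma rank_unit_columns q n (X : 'M['F_2]_(q, n)) :
  (forall k, exists i, col i X = delta_mx k 0) -> \rank X = q.
Proof.
move=> /fin_all_exists [g colg].
pose M : 'M['F_2]_(n, q) := \matrix_(i, k) (i == g k)%:R.
have XM1 : X *m M = 1%:M.
  apply/matrixP => r k; rewrite !mxE (bigD1 (g k)) //= big1 => [|i /negbTE neq_i].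
    have := congr1 (fun v : 'cV_q => v r 0) (colg k); rewrite !mxE => ->.
    by rewrite !eqxx mulr1 addr0 andbT.
  by rewrite !mxE neq_i mulr0.
apply/eqP; rewrite eqn_leq rank_leq_row /=.
by rewrite -{1}(mxrank1 'F_2 q) -XM1 mxrankM_maxl.
Qed.

Lemma delta_mx_neq0 (R : nzRingType) m p (i : 'I_m) (j : 'I_p) :
  (delta_mx i j : 'M[R]_(m, p)) != 0.
Proof.
by apply/eqP => /matrixP /(_ i j); rewrite !mxE !eqxx => /eqP; rewrite oner_eq0.
Qed.

Section Recolouring.

Variables (n q : nat) (e : rel 'I_n).
Hypotheses (e_irr : irreflexive e) (q_le_n : (q <= n)%N).

Notation nonzero := [set v : 'cV['F_2]_q | v != 0].

Definition unit_colours (c : 'I_n -> 'cV['F_2]_q) : {set 'I_q} :=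
  [set k | [exists i, c i == delta_mx k 0]].

(* Vertex v can be recoloured without losing a unit colour: its colour is not
   a unit vector or it is shared with another vertex. *)
Definition redundant (c : 'I_n -> 'cV['F_2]_q) (v : 'I_n) : bool :=
  ~~ [exists k, c v == delta_mx k 0] || [exists v', (v' != v) && (c v' == c v)].

(* Pigeonhole: if fewer than n unit colours are used, the vertices cannot all
   own distinct unit colours, so some vertex is redundant. *)
Lemma exists_redundant c : (#|unit_colours c| < n)%N -> exists v, redundant c v.
Proof.
move=> few_units; apply/existsP; apply: contraLR few_units => /existsPn no_red.
have [owns_unit c_inj] : (forall v, exists k, c v = delta_mx k 0) /\ injective c.
  split=> [v | v v' eq_c].
    by have := no_red v; rewrite negb_or negbK => /andP [/existsP [k /eqP]]; exists k.
  apply/eqP; apply: contraT => neq_v.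
  have := no_red v; rewrite negb_or => /andP [_ /existsPn /(_ v')].
  by rewrite eq_sym neq_v eq_c eqxx.
have sub_units : c @: 'I_n \subset (fun k => delta_mx k 0) @: unit_colours c.
  apply/subsetP => _ /imsetP [v _ ->]; have [k ck] := owns_unit v.
  by rewrite ck; apply: imset_f; rewrite inE; apply/existsP; exists v; rewrite ck.
rewrite -leqNgt; have := subset_leq_card sub_units.
by rewrite card_imset // card_ord => /leq_trans; apply; exact: leq_imset_card.
Qed.

(* One step: recolour a redundant vertex with a missing unit vector; this keeps
   the colouring proper and strictly enlarges the set of unit colours. *)
Lemma recolour_step c : proper_coloring e nonzero c -> (#|unit_colours c| < q)%N ->
  exists c', proper_coloring e nonzero c' /\ (#|unit_colours c| < #|unit_colours c'|)%N.
Proof.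
move=> [c_nz c_proper] few_units.
have [k k_new] : exists k, k \notin unit_colours c.
  apply/existsP; apply: contraLR few_units => /existsPn all_units.
  rewrite -leqNgt -[X in (X <= _)%N]card_ord subset_leq_card //.
  by apply/subsetP => k _; apply/negbNE.
have k_unused y : c y != delta_mx k 0.
  by apply: contra k_new => /eqP cy; rewrite inE; apply/existsP; exists y; rewrite cy.
have [v v_red] := exists_redundant (leq_trans few_units q_le_n).
pose c' i := if i == v then delta_mx k 0 else c i.
exists c'; split; first split.
- move=> i; rewrite /c' inE; case: (i == v); first exact: delta_mx_neq0.
  by have := c_nz i; rewrite inE.
- move=> i j eij; rewrite /c'.
  case: (eqVneq i v) => [iv | _]; case: (eqVneq j v) => [jv | _].
  + by move: eij; rewrite iv jv e_irr.
  + by rewrite eq_sym k_unused.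
  + by rewrite k_unused.
  + exact: c_proper.
- apply: proper_card; apply/properP; split; last first.
    by exists k => //; rewrite inE; apply/existsP; exists v; rewrite /c' eqxx.
  apply/subsetP => k'; rewrite !inE => /existsP [x /eqP cx]; apply/existsP.
  rewrite /c'; case: (eqVneq x v) => [xv | nxv]; last by exists x; rewrite (negbTE nxv) cx.
  move: v_red; rewrite /redundant -xv cx.
  have -> : [exists k0, delta_mx k' 0 == delta_mx k0 0 :> 'cV['F_2]_q] by apply/existsP; exists k'.
  case/existsP => v' /andP [neq_v' /eqP cv']; exists v'.
  by rewrite (negbTE neq_v') cv'.
Qed.

Lemma recolour c : proper_coloring e nonzero c ->
  exists c', proper_coloring e nonzero c' /\ forall k, exists i, c' i = delta_mx k 0.
Proof.
move=> c_proper.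
have [c' [c'_proper all_units]] : exists c', proper_coloring e nonzero c' /\ (q <= #|unit_colours c'|)%N.
  suff : forall m, (m <= q)%N ->
      exists c', proper_coloring e nonzero c' /\ (m <= #|unit_colours c'|)%N by apply.
  elim=> [|m IHm] lt_mq; first by exists c.
  have [c1 [c1_proper le_m]] := IHm (ltnW lt_mq).
  case: (ltnP m #|unit_colours c1|) => [lt_m | le_units]; first by exists c1.
  have [c2 [c2_proper grow]] := recolour_step c1_proper (leq_ltn_trans le_units lt_mq).
  by exists c2; split => //; apply: leq_ltn_trans le_m grow.
exists c'; split=> // k.
have : unit_colours c' = setT by apply/eqP; rewrite eqEcard subsetT cardsT card_ord.
by move/setP/(_ k); rewrite !inE => /existsP [i /eqP]; exists i.
Qed.

End Recolouring.

Local Close Scope ring_scope.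

Theorem lemma1 (n q : nat) (e : rel 'I_n) :
  1 <= q -> q <= n -> simple_graph e ->
  (exists X : 'M['F_2]_(q, n),
      \rank X = q /\
      (forall i : 'I_n, estimable X [set i]) /\
      (forall i j : 'I_n, e i j -> estimable X [set i; j]))
  <-> chromatic_number e <= 2 ^ q - 1.
Proof.
move=> _ q_le_n [_ e_irr].
have neq_edge i j : e i j -> i != j by apply: contraTneq => ->; rewrite e_irr.
rewrite chromatic_number_le // -card_nonzero_vectors colorable_setP.
split=> [[X [_ [main inter]]] | [c c_proper]].
  exists (fun i => col i X); split=> [i | i j eij]; first by rewrite inE -estimable_main.
  exact/(estimable_interaction _ (neq_edge i j eij))/inter.
have [c' [[c'_nz c'_proper] c'_units]] := recolour e_irr q_le_n c_proper.
pose X : 'M['F_2]_(q, n) := (\matrix_(r, i) c' i r ord0)%R.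
have colX i : col i X = c' i by apply/matrixP => r s; rewrite !mxE (ord1 s).
exists X; split; [|split] => [|i|i j eij].
- by apply: rank_unit_columns => k; have [i <-] := c'_units k; exists i.
- by apply/estimable_main; rewrite colX; have := c'_nz i; rewrite inE.
- by apply/estimable_interaction; rewrite ?colX; [exact: neq_edge | exact: c'_proper].
Qed.
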